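(* Assume the general coarsening setting described in the context. Let $\mathbf{1}$ denote the path identically equal to $1$, i.e. $\{R=\mathbf{1}\}=\{R_t=1 \text{ for all } t\ge 0\}$. Then the mechanism leading to incomplete data is ignorable on $\mathbf{1}$: for all $\theta\in\Theta$ and every $\psi_0\in\Psi$, $$\mathcal{L}^{(\theta,\psi_0)/(\theta_0,\psi_0)}_{\mathcal{O}}=\mathcal{L}^{\theta/\theta_0}_{\mathcal{X}}\quad\text{a.s. on } \{R_t=1,\ t\ge 0\}.$$
   Context: Setting (general coarsening model for processes). On a measurable space $(\Omega,\mathcal{F})$ live two càdlàg stochastic processes: $X=(X_t)_{t\ge0}$ with values in $\mathbb{R}^d$ (path space a Skorohod space with its Borel $\sigma$-field) and a response indicator process $R=(R_t)_{t\ge0}$ with values in $\{0,1\}$ (componentwise if multivariate), $R_t=1$ meaning that $X_t$ is observed. Let $\mathcal{X}=\sigma(X_t,t\ge0)$, $\mathcal{R}=\sigma(R_t,t\ge0)$ and $\mathcal{F}=\mathcal{X}\vee\mathcal{R}$. A model is a family $\{P_{(\theta,\psi)}:(\theta,\psi)\in\Theta\times\Psi\}$ of mutually equivalent probability measures on $\mathcal{F}$ (parameter spaces possibly infinite-dimensional), with reference measure $P_{(\theta_0,\psi_0)}$; the restriction of $P_{(\theta,\psi)}$ to $\mathcal{X}$ depends only on $\theta$ and is denoted $P_\theta$. Non-informativeness is assumed: $P_{(\theta_1,\psi)}(A\mid\mathcal{X})=P_{(\theta_2,\psi)}(A\mid\mathcal{X})$ a.s. for all $A\in\mathcal{R}$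 and all $\theta_1,\theta_2,\psi$. For a sub-$\sigma$-field $\mathcal{G}$, $\mathcal{L}^{(\theta,\psi)/(\theta_0,\psi_0)}_{\mathcal{G}}$ denotes the Radon–Nikodym derivative of $P_{(\theta,\psi)}$ with respect to $P_{(\theta_0,\psi_0)}$ restricted to $\mathcal{G}$; for $\mathcal{G}\subset\mathcal{X}$ it depends only on $\theta,\theta_0$ and is written $\mathcal{L}^{\theta/\theta_0}_{\mathcal{G}}$. The observed $\sigma$-field is $\mathcal{O}=\sigma(R_tX_t,R_t,\ t\ge0)$. For a deterministic path $r=(r_t)$, $\{R=r\}=\{R_t=r_t\ \forall t\ge0\}$ and $\mathcal{X}^r=\sigma(r_tX_t,\ t\ge0)$. The mechanism is called ignorable on $r$ if $\mathcal{L}^{(\theta,\psi_0)/(\theta_0,\psi_0)}_{\mathcal{O}}=\mathcal{L}^{\theta/\theta_0}_{\mathcal{X}^r}$ a.s. on $\{R=r\}$ for all $\theta$, whatever $\psi_0$. *)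

From HB Require Import structures.
From mathcomp Require Import all_boot all_order all_algebra.
From mathcomp Require Import all_classical all_reals all_analysis.
Set Implicit Arguments. Unset Strict Implicit. Unset Printing Implicit Defensive.
Import Order.TTheory GRing.Theory Num.Theory.
Import numFieldNormedType.Exports.
Local Open Scope classical_set_scope.
Local Open Scope ring_scope.

Definition sigma_gen (T : Type) (G : set (set T)) : set (set T) := <<s G >>.

Definition gmeasurable (T : Type) (R : realType) (G : set (set T)) (f : T -> R) :=
  forall B : set R, measurable B -> G (f @^-1` B).

Definition cadlag (R : realType) (f : R -> R) : Prop :=
  forall t : R, 0 <= t ->
    (f x @[x --> t^'+] --> f t) /\ (0 < t -> cvg (f x @[x --> t^'-])).

(* X = sigma(X_t, t >= 0), X_t = (X t i)_{i < dim} with values in R^dim *)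
Definition sigmaX (T : Type) (R : realType) (dim : nat)
  (X : R -> 'I_dim -> T -> R) : set (set T) :=
  sigma_gen [set A | exists t i (B : set R),
                     0 <= t /\ measurable B /\ A = X t i @^-1` B].

(* R = sigma(R_t, t >= 0), R_t = (R t i)_{i < dim} with values in {0,1}^dim *)
Definition sigmaR (T : Type) (R : realType) (dim : nat)
  (Rp : R -> 'I_dim -> T -> bool) : set (set T) :=
  sigma_gen [set A | exists t i (B : set bool),
                     0 <= t /\ A = Rp t i @^-1` B].

Definition sigmaF (T : Type) (R : realType) (dim : nat)
  (X : R -> 'I_dim -> T -> R) (Rp : R -> 'I_dim -> T -> bool) : set (set T) :=
  sigma_gen (sigmaX X `|` sigmaR Rp).

(* the observed sigma-field O = sigma(R_t X_t, R_t, t >= 0)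
   (R_t X_t is the componentwise product) *)
Definition sigmaO (T : Type) (R : realType) (dim : nat)
  (X : R -> 'I_dim -> T -> R) (Rp : R -> 'I_dim -> T -> bool) : set (set T) :=
  sigma_gen ([set A | exists t i (B : set R), 0 <= t /\ measurable B /\
                  A = (fun w => if Rp t i w then X t i w else 0) @^-1` B]
             `|` [set A | exists t i (B : set bool),
                     0 <= t /\ A = Rp t i @^-1` B]).

Definition is_RN_deriv d (T : measurableType d) (R : realType)
  (G : set (set T)) (mu nu : {measure set T -> \bar R}) (f : T -> R) : Prop :=
  gmeasurable G f /\
  forall A, G A -> mu A = (\int[nu]_(x in A) (f x)%:E)%E.

Definition is_cond_prob d (T : measurableType d) (R : realType)
  (G : set (set T)) (P : {measure set T -> \bar R}) (A : set T) (h : T -> R) : Prop :=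
  gmeasurable G h /\
  forall B, G B -> P (A `&` B) = (\int[P]_(x in B) (h x)%:E)%E.

From HB Require Import structures.
From mathcomp Require Import all_boot all_order all_algebra.
From mathcomp Require Import all_classical all_reals all_analysis.
From mathcomp Require Import measurable_realfun lebesgue_measure lra.
Set Implicit Arguments. Unset Strict Implicit. Unset Printing Implicit Defensive.
Import Order.TTheory GRing.Theory Num.Theory.
Import numFieldNormedType.Exports.
Local Open Scope classical_set_scope.
Local Open Scope ring_scope.

(* S := {R_t = 1 for all t} lies in sigma(R) because R is right-continuous, and
   on S the observed process coincides with X, so O and X have the same trace on
   S.  Let k be the density of P_theta w.r.t. P_theta0 on X.  Non-informativeness
   makes P(S | X) the same under both measures, hence for A in X
     P_theta(A n S) = int_A P(S|X) dP_theta = int_A P(S|X) k dP_theta0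
                    = int_(A n S) k dP_theta0.
   Thus k 1_S and f 1_S are both densities of P_theta(. n S) w.r.t. P_theta0
   on O, and uniqueness of densities gives f = k = g a.e. on S. *)

Section sigma_gen_trace.
Context (T : pointedType) (G H : set (set T)) (S : set T).

Lemma sigma_gen_setI : <<s G >> S -> (forall A, H A -> <<s G >> (A `&` S)) ->
  forall A, <<s H >> A -> <<s G >> (A `&` S).
Proof.
move=> GS HS; apply: smallest_sub => //; split.
- by rewrite set0I; exact: sigma_algebra0.
- move=> A GAS; rewrite setTD setIC -setDE -[S `\` A]setU0 -(setDv S) -setDIr.
  exact: (@measurableD _ (g_sigma_algebraType G)).
- by move=> F GF; rewrite setI_bigcupl; exact: sigma_algebra_bigcup.
Qed.

Lemma sigma_gen_trace :
  (forall B, G B -> exists2 A, <<s H >> A & B `&` S = A `&` S) ->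
  forall B, <<s G >> B -> exists2 A, <<s H >> A & B `&` S = A `&` S.
Proof.
move=> GH; apply: smallest_sub => //; split.
- by exists set0 => //; exact: sigma_algebra0.
- move=> B [A HA BA]; exists (setT `\` A); first exact: sigma_algebraCD.
  apply/seteqP; split => x [[_ nX] Sx]; split => //; split => // Yx; apply: nX.
  + by have [] : (B `&` S) x by rewrite BA.
  + by have [] : (A `&` S) x by rewrite -BA.
- move=> F HF; have /choice[A HA] : forall n, exists A,
      <<s H >> A /\ F n `&` S = A `&` S.
    by move=> n; have [A] := HF n; exists A.
  exists (\bigcup_n A n); first by apply: sigma_algebra_bigcup => n; exact: (HA n).1.
  by rewrite !setI_bigcupl; apply: eq_bigcupr => n _; exact: (HA n).2.
Qed.

End sigma_gen_trace.

Lemma right_continuous_rat_eq (R : realType) (f : R -> R) (t c : R) :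
  f x @[x --> t^'+] --> f t -> (forall q : rat, t < ratr q -> f (ratr q) = c) ->
  f t = c.
Proof.
move=> ft fc; apply/eqP/negP => /negP ftc.
have e0 : 0 < `|f t - c| by rewrite normr_gt0 subr_eq0.
have [e /= e_gt0 near_t] := cvgr_dist_lt _ _ ft _ e0.
have [q] := @rat_in_itvoo R t (t + e) ltac:(lra).
rewrite in_itv /= => /andP[tq qte].
suff : ball_ Num.norm t e (ratr q) by move/near_t/(_ tq); rewrite fc // ltxx.
by rewrite /ball_ /= ltr_distlC; apply/andP; split; lra.
Qed.

Section integral_mrestr.
Local Open Scope ereal_scope.
Context d (T : measurableType d) (R : realType).
Variables (mu : {finite_measure set T -> \bar R}) (D : set T) (mD : measurable D).

Lemma ge0_integral_mrestr A (h : T -> \bar R) : measurable A ->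
  measurable_fun setT h -> (forall x, 0 <= h x) ->
  \int[mrestr mu mD]_(x in A) h x = \int[mu]_(x in A `&` D) h x.
Proof.
move=> mA mh h0.
have restr_mu : mrestr mu mD `<< mu.
  apply/null_content_dominatesP => B mB muB0.
  apply/eqP; rewrite eq_le measure_ge0 andbT -muB0.
  by apply: le_measure; rewrite ?inE; [exact: measurableI| |exact: subIsetl].
have dD : ae_eq mu setT (Radon_Nikodym_SigmaFinite.f (mrestr mu mD) mu)
    (EFin \o \1_D).
  apply: integral_ae_eq => //.
  - exact: Radon_Nikodym_SigmaFinite.f_integrable.
  - exact/measurable_EFinP/measurable_indic.
  - move=> E _ mE; rewrite -Radon_Nikodym_SigmaFinite.f_integral//.
    by rewrite integral_indic// /mrestr setIC.
rewrite -(Radon_Nikodym_SigmaFinite.change_of_variables restr_mu h0 mA); last first.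
  exact: measurable_funTS.
rewrite integral_mkcondr; apply: ae_eq_integral => //.
- apply: measurable_funTS; apply: emeasurable_funM => //.
  exact: measurable_int (Radon_Nikodym_SigmaFinite.f_integrable _).
- by apply: measurable_funTS; apply/(measurable_restrictT h mD); exact: measurable_funTS.
- apply: filterS dD => x /(_ I) -> _.
  by rewrite /patch /= indicE; case: (x \in D); rewrite ?mule1 ?mule0.
Qed.

End integral_mrestr.

Section measure_on.
Local Open Scope ereal_scope.
Context d (T : measurableType d) (R : realType) (G : set (set T)).
Hypothesis GT : G `<=` measurable.
Local Notation TG := (g_sigma_algebraType G).

Lemma sigma_gen_measurable : <<s G >> `<=` measurable.
Proof. by apply: smallest_sub => //; exact: sigma_algebra_measurable. Qed.

Lemma measurable_fun_sigma_gen (h : T -> \bar R) :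
  measurable_fun (T:=TG) setT h -> measurable_fun setT h.
Proof.
move=> mh _ B mB; rewrite setTI; apply: sigma_gen_measurable.
by have := mh measurableT B mB; rewrite setTI.
Qed.

(* [mu] itself, read on the coarser sigma-algebra <<s G >>; the proof of
   [G `<=` measurable] is an argument so that the measure instances below are
   found by unification. *)
Definition measure_on (mu : set T -> \bar R) of G `<=` measurable :
  set TG -> \bar R := mu.

Section measure_on_measure.
Variable mu : {measure set T -> \bar R}.
Local Notation muG := (measure_on mu GT).

Let muG0 : muG set0 = 0. Proof. exact: measure0. Qed.

Let muG_ge0 A : 0 <= muG A. Proof. exact: measure_ge0. Qed.

Let muG_sigma_additive : semi_sigma_additive muG.
Proof.
move=> F mF tF mUF; apply: (@measure_semi_sigma_additive _ _ _ mu).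
- by move=> n; apply: sigma_gen_measurable; exact: mF.
- exact: tF.
- exact: sigma_gen_measurable.
Qed.

HB.instance Definition _ := isMeasure.Build _ _ _ muG
  muG0 muG_ge0 muG_sigma_additive.

Lemma ae_measure_on (Q : T -> Prop) : {ae muG, forall x, Q x} -> {ae mu, forall x, Q x}.
Proof. by move=> [N [mN N0 QN]]; exists N; split => //; exact: sigma_gen_measurable. Qed.

Lemma integral_measure_on A (h : T -> \bar R) : <<s G >> A ->
  measurable_fun (T:=TG) setT h ->
  \int[muG]_(x in A) h x = \int[mu]_(x in A) h x.
Proof.
move=> mA mh; have mid : measurable_fun (setT : set T) (id : T -> TG).
  by move=> _ B mB; rewrite setTI; exact: sigma_gen_measurable.
rewrite (_ : muG = pushforward mu (id : T -> TG)) // [LHS]integralE [RHS]integralE.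
by rewrite !(ge0_integral_pushforward mid) //;
  [exact/measurable_funeneg/measurable_funTS|exact/measurable_funepos/measurable_funTS].
Qed.

End measure_on_measure.

Section measure_on_finite.
Variable mu : {finite_measure set T -> \bar R}.

Let muG_fin : fin_num_fun (measure_on mu GT).
Proof. by move=> A mA; apply: fin_num_measure; exact: sigma_gen_measurable. Qed.

HB.instance Definition _ := Measure_isFinite.Build _ _ _ (measure_on mu GT) muG_fin.

End measure_on_finite.
End measure_on.

Section RN_deriv_on.
Local Open Scope ereal_scope.
Context d (T : measurableType d) (R : realType) (G : set (set T)).
Hypothesis GT : G `<=` measurable.
Local Notation TG := (g_sigma_algebraType G).

Lemma gmeasurableP (k : T -> R) :
  gmeasurable <<s G >> k <-> measurable_fun (T:=TG) setT k.
Proof.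
split => [mk _ B mB|mk B mB]; first by rewrite setTI; exact: mk.
by have := mk measurableT B mB; rewrite setTI.
Qed.

Section RN_deriv_on_def.
Variables mu nu : {finite_measure set T -> \bar R}.

(* The explicit [TG] matters: since [set TG] and [set T] are convertible,
   Rocq would otherwise elaborate the derivative on the full sigma-algebra. *)
Local Notation dmu_dnu :=
  (@Radon_Nikodym_SigmaFinite.f _ TG R (measure_on mu GT) (measure_on nu GT)).

Definition RN_deriv_on : T -> R := fun x => fine (dmu_dnu x).

Hypothesis mu_nu : forall A, <<s G >> A -> nu A = 0 -> mu A = 0.

Let dom : measure_on mu GT `<< measure_on nu GT.
Proof. by apply/null_content_dominatesP => A; exact: mu_nu. Qed.

Let RN_derivE : EFin \o RN_deriv_on = dmu_dnu.
Proof.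
rewrite funeqE => x /=; rewrite fineK//.
exact: Radon_Nikodym_SigmaFinite.f_fin_num.
Qed.

Lemma RN_deriv_on_ge0 x : (0 <= RN_deriv_on x)%R.
Proof. by apply: fine_ge0; exact: Radon_Nikodym_SigmaFinite.f_ge0. Qed.

Lemma measurable_RN_deriv_on : measurable_fun (T:=TG) setT (EFin \o RN_deriv_on).
Proof.
rewrite RN_derivE.
exact: measurable_int (Radon_Nikodym_SigmaFinite.f_integrable dom).
Qed.

Lemma is_RN_deriv_on : is_RN_deriv <<s G >> mu nu RN_deriv_on.
Proof.
split; first by apply/gmeasurableP/measurable_EFinP; exact: measurable_RN_deriv_on.
move=> A mA; rewrite -(integral_measure_on GT) //; last exact: measurable_RN_deriv_on.
transitivity (measure_on mu GT A) => //.
by rewrite (Radon_Nikodym_SigmaFinite.f_integral dom mA) -RN_derivE.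
Qed.

Lemma integral_RN_deriv_on A (h : T -> \bar R) : <<s G >> A ->
  measurable_fun (T:=TG) setT h -> (forall x, 0 <= h x) ->
  \int[mu]_(x in A) h x = \int[nu]_(x in A) (h x * (RN_deriv_on x)%:E).
Proof.
move=> mA mh h0; rewrite -!(integral_measure_on GT) //; last first.
  by apply: emeasurable_funM => //; exact: measurable_RN_deriv_on.
rewrite -(Radon_Nikodym_SigmaFinite.change_of_variables dom h0 mA) //; last first.
  exact: measurable_funTS.
by rewrite -RN_derivE.
Qed.

End RN_deriv_on_def.

Lemma RN_deriv_ae_unique (mu : {finite_measure set T -> \bar R})
    (nu : {measure set T -> \bar R}) (k1 k2 : T -> R) :
  (forall x, (0 <= k1 x)%R) ->
  is_RN_deriv <<s G >> mu nu k1 -> is_RN_deriv <<s G >> mu nu k2 ->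
  {ae nu, forall x, k1 x = k2 x}.
Proof.
move=> k1_ge0 [/gmeasurableP/measurable_EFinP mk1 k1E].
move=> [/gmeasurableP/measurable_EFinP mk2 k2E].
have k1_int : (measure_on nu GT).-integrable setT (EFin \o k1).
  apply/integrableP; split => //.
  under eq_integral do rewrite /= ger0_norm//.
  rewrite (integral_measure_on GT) //; last exact: (@measurableT _ TG).
  have muT : mu setT < +oo by rewrite ltey_eq fin_num_measure.
  by rewrite k1E in muT; last exact: (@measurableT _ TG).
have k12 : ae_eq (measure_on nu GT) setT (EFin \o k1) (EFin \o k2).
  apply: (integral_ae_eq (@measurableT _ TG) k1_int mk2) => E _ mE.
  by rewrite !(integral_measure_on GT) // -k1E // -k2E.
have /ae_measure_on// : {ae measure_on nu GT, forall x, k1 x = k2 x}.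
by apply: filterS k12 => x /(_ I) [].
Qed.

Let mrestr_null (P : {finite_measure set T -> \bar R}) (S : set T)
    (mS : measurable S) A :
  <<s G >> A -> P A = 0 -> mrestr P mS A = 0.
Proof.
move=> /(sigma_gen_measurable GT) mA PA0.
apply/eqP; rewrite eq_le measure_ge0 andbT -PA0.
by apply: le_measure; rewrite ?inE; [exact: measurableI| |exact: subIsetl].
Qed.

Lemma is_cond_prob_RN_deriv_on (P : {finite_measure set T -> \bar R})
    (S : set T) (mS : measurable S) :
  is_cond_prob <<s G >> P S (RN_deriv_on (mrestr P mS) P).
Proof.
have [mk kE] := is_RN_deriv_on (mrestr_null (P:=P) mS).
by split => // B mB; rewrite setIC; exact: kE.
Qed.

Lemma RN_deriv_on_setI (Pt P0 : {finite_measure set T -> \bar R})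
    (S : set T) (mS : measurable S) :
  (forall A, <<s G >> A -> P0 A = 0 -> Pt A = 0) ->
  {ae Pt, forall x,
    RN_deriv_on (mrestr Pt mS) Pt x = RN_deriv_on (mrestr P0 mS) P0 x} ->
  forall A, <<s G >> A ->
    Pt (A `&` S) = \int[P0]_(x in A `&` S) (RN_deriv_on Pt P0 x)%:E.
Proof.
move=> Pt_P0 same_cond A mA.
set p0 := RN_deriv_on (mrestr P0 mS) P0; set k := RN_deriv_on Pt P0.
have mpt := measurable_RN_deriv_on (mrestr_null (P:=Pt) mS).
have mp0 := measurable_RN_deriv_on (mrestr_null (P:=P0) mS).
have mk := measurable_RN_deriv_on Pt_P0.
have mAT := sigma_gen_measurable GT mA.
have p0_ge0 x : 0 <= (p0 x)%:E.
  by rewrite lee_fin; exact: RN_deriv_on_ge0 (mrestr_null (P:=P0) mS) x.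
have k_ge0 x : 0 <= (k x)%:E by rewrite lee_fin; exact: RN_deriv_on_ge0 Pt_P0 x.
rewrite [X in Pt X]setIC (is_cond_prob_RN_deriv_on Pt mS).2 //.
transitivity (\int[Pt]_(x in A) (p0 x)%:E).
  apply: ae_eq_integral => //.
  - apply: measurable_funTS; exact: (measurable_fun_sigma_gen GT mpt).
  - apply: measurable_funTS; exact: (measurable_fun_sigma_gen GT mp0).
  - by apply: filterS same_cond => x -> _.
transitivity (\int[P0]_(x in A) ((p0 x)%:E * (k x)%:E)).
  exact: (integral_RN_deriv_on Pt_P0 mA mp0 p0_ge0).
transitivity (\int[mrestr P0 mS]_(x in A) (k x)%:E); last first.
  by apply: ge0_integral_mrestr => //; exact: (measurable_fun_sigma_gen GT mk).
rewrite (integral_RN_deriv_on (mrestr_null (P:=P0) mS) mA mk k_ge0).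
by apply: eq_integral => x _; rewrite muleC.
Qed.

End RN_deriv_on.

Section RN_deriv_restrict.
Local Open Scope ereal_scope.
Context d (T : measurableType d) (R : realType) (G : set (set T)) (S : set T).
Hypothesis GS : <<s G >> S.

Lemma gmeasurable_restrict (H : set (set T)) (k : T -> R) :
  (forall A, <<s H >> A -> <<s G >> (A `&` S)) ->
  gmeasurable <<s H >> k -> gmeasurable <<s G >> (k \_ S).
Proof.
move=> HG mk; apply/gmeasurableP.
apply/(@measurable_restrictT _ _ (g_sigma_algebraType G) _ S k GS) => _ B mB.
by rewrite setIC; apply: HG; exact: mk.
Qed.

Lemma is_RN_deriv_mrestr (mS : measurable S) (mu nu : {measure set T -> \bar R})
    (k : T -> R) :
  is_RN_deriv <<s G >> mu nu k -> is_RN_deriv <<s G >> (mrestr mu mS) nu (k \_ S).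
Proof.
move=> [mk kE]; split.
  apply: (gmeasurable_restrict _ mk) => A GA.
  exact: (@measurableI _ (g_sigma_algebraType G)).
move=> A GA; transitivity (mu (A `&` S)) => //.
rewrite kE; last exact: (@measurableI _ (g_sigma_algebraType G)).
by rewrite integral_mkcondr; apply: eq_integral => x _; rewrite /patch; case: ifP.
Qed.

End RN_deriv_restrict.

Section coarsening.
Context (R : realType) (d : measure_display) (Omega : measurableType d) (dim : nat)
  (X : R -> 'I_dim -> Omega -> R) (Rp : R -> 'I_dim -> Omega -> bool).

Definition observed t i w := if Rp t i w then X t i w else 0.

Definition genX : set (set Omega) :=
  [set A | exists t i (B : set R), 0 <= t /\ measurable B /\ A = X t i @^-1` B].

Definition genR : set (set Omega) :=
  [set A | exists t i (B : set bool), 0 <= t /\ A = Rp t i @^-1` B].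

Definition genO : set (set Omega) :=
  [set A | exists t i (B : set R), 0 <= t /\ measurable B /\ A = observed t i @^-1` B]
  `|` genR.

Definition fully_observed : set Omega := [set w | forall t i, 0 <= t -> Rp t i w].

Lemma preimage_observed_setI t i (B : set R) : 0 <= t ->
  observed t i @^-1` B `&` fully_observed = X t i @^-1` B `&` fully_observed.
Proof.
by move=> t0; apply/seteqP; split => w [Bw Sw]; split;
  rewrite //= /observed Sw in Bw *.
Qed.

Lemma preimage_Rp_setI t i (B : set bool) : 0 <= t ->
  Rp t i @^-1` B `&` fully_observed = [set _ | B true] `&` fully_observed.
Proof.
by move=> t0; apply/seteqP; split => w [Bw Sw]; split; rewrite //= Sw in Bw *.
Qed.

Section measurability.
Hypothesis hXm : forall t i, 0 <= t -> measurable_fun setT (X t i).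
Hypothesis hRm : forall t i, 0 <= t -> measurable [set w | Rp t i w].

Lemma measurable_Rp t i : 0 <= t -> measurable_fun setT (Rp t i).
Proof. by move=> t0; apply: (measurable_fun_bool true); rewrite setTI; exact: hRm. Qed.

Lemma genX_measurable : genX `<=` measurable.
Proof.
by move=> _ [t [i [B [t0 [mB ->]]]]]; rewrite -(setTI (_ @^-1` _)); exact: hXm.
Qed.

Lemma genR_measurable : genR `<=` measurable.
Proof.
by move=> _ [t [i [B [t0 ->]]]]; rewrite -(setTI (_ @^-1` _)); exact: measurable_Rp.
Qed.

Lemma genO_measurable : genO `<=` measurable.
Proof.
move=> A [[t [i [B [t0 [mB ->]]]]]|/genR_measurable//].
rewrite -(setTI (_ @^-1` _)); apply: measurable_fun_ifT => //.
- exact: measurable_Rp.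
- exact: hXm.
Qed.

End measurability.

Section fully_observed.
Hypothesis hRc : forall i w, cadlag (fun t => ((Rp t i w : nat)%:R : R)).

Lemma fully_observedE : fully_observed =
  \bigcap_(p : rat * 'I_dim) [set w | 0 <= (ratr p.1 : R) -> Rp (ratr p.1) p.2 w].
Proof.
apply/seteqP; split => w; first by move=> Sw p _; exact: Sw.
move=> Sw t i t0; suff : ((Rp t i w : nat)%:R : R) = 1.
  by case: (Rp t i w) => // /eqP; rewrite eq_sym oner_eq0.
apply: (right_continuous_rat_eq (f := fun s => (Rp s i w : nat)%:R) (hRc i w t0).1).
move=> q tq.
by rewrite (Sw (q, i)) //; exact: le_trans t0 (ltW tq).
Qed.

Lemma sigmaR_fully_observed : sigmaR Rp fully_observed.
Proof.
rewrite fully_observedE -(setCK (\bigcap_p _)) setC_bigcap.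
apply: (@measurableC _ (g_sigma_algebraType genR)).
apply: countable_bigcupT_measurable => [|[q i]]; first exact: countableP.
apply: (@measurableC _ (g_sigma_algebraType genR)) => /=.
case: (leP 0 (ratr q)) => q0.
- apply: sub_sigma_algebra; exists (ratr q), i, [set true]; split => //.
  by apply/seteqP; split => w /=; [move=> /(_ isT)|move=> ->].
- rewrite (_ : [set w | _] = setT); last by apply/seteqP; split.
  exact: (@measurableT _ (g_sigma_algebraType genR)).
Qed.

Lemma sigmaO_fully_observed : sigmaO X Rp fully_observed.
Proof.
apply: (sub_smallest2r _ _ sigmaR_fully_observed) => [|A]; last by right.
exact: smallest_sigma_algebra.
Qed.

Lemma sigmaX_setI_sigmaO A : sigmaX X A -> sigmaO X Rp (A `&` fully_observed).
Proof.
apply: sigma_gen_setI; first exact: sigmaO_fully_observed.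
move=> _ [t [i [B [t0 [mB ->]]]]]; rewrite -preimage_observed_setI //.
apply: (@measurableI _ (g_sigma_algebraType genO)); last exact: sigmaO_fully_observed.
by apply: sub_sigma_algebra; left; exists t, i, B.
Qed.

Lemma sigmaO_trace_sigmaX E : sigmaO X Rp E ->
  exists2 A, sigmaX X A & E `&` fully_observed = A `&` fully_observed.
Proof.
apply: sigma_gen_trace => _ [[t [i [B [t0 [mB ->]]]]]|[t [i [B [t0 ->]]]]].
- exists (X t i @^-1` B); last exact: preimage_observed_setI.
  by apply: sub_sigma_algebra; exists t, i, B.
- rewrite preimage_Rp_setI //; have [Bt|nBt] := pselect (B true).
  + exists setT; first exact: (@measurableT _ (g_sigma_algebraType genX)).
    by congr (_ `&` _); apply/seteqP; split.
  + exists set0; first exact: (@measurable0 _ (g_sigma_algebraType genX)).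
    by congr (_ `&` _); apply/seteqP; split.
Qed.

Lemma is_RN_deriv_sigmaO_restrict (mS : measurable fully_observed)
    (mu nu : {measure set Omega -> \bar R}) (k : Omega -> R) :
  gmeasurable (sigmaX X) k ->
  (forall A, sigmaX X A ->
    mu (A `&` fully_observed) = (\int[nu]_(x in A `&` fully_observed) (k x)%:E)%E) ->
  is_RN_deriv (sigmaO X Rp) (mrestr mu mS) nu (k \_ fully_observed).
Proof.
move=> mk kE; split.
  exact: (@gmeasurable_restrict _ _ _ genO _ sigmaO_fully_observed genX k
    sigmaX_setI_sigmaO mk).
move=> E /sigmaO_trace_sigmaX[A hA EA].
transitivity (mu (E `&` fully_observed)) => //; rewrite EA kE // -EA.
by rewrite integral_mkcondr; apply: eq_integral => x _; rewrite /patch; case: ifP.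
Qed.

End fully_observed.
End coarsening.

Theorem mainTheorem1
  (R : realType) (d : measure_display) (Omega : measurableType d) (dim : nat)
  (X : R -> 'I_dim -> Omega -> R) (Rp : R -> 'I_dim -> Omega -> bool)
  (Theta Psi : Type) (P : Theta -> Psi -> probability Omega R)
  (theta0 : Theta)
  (* X and R are cadlag processes, measurable on Omega *)
  (hXm : forall t i, 0 <= t -> measurable_fun setT (X t i))
  (hRm : forall t i, 0 <= t -> measurable [set w | Rp t i w])
  (hXc : forall i w, cadlag (fun t => X t i w))
  (hRc : forall i w, cadlag (fun t => ((Rp t i w : nat)%:R : R)))
  (* the P_(theta,psi) are mutually equivalent on F *)
  (hequiv : forall th1 ps1 th2 ps2 A, sigmaF X Rp A ->
      (P th1 ps1 A = 0%E <-> P th2 ps2 A = 0%E))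
  (* the restriction of P_(theta,psi) to X depends only on theta *)
  (hXonly : forall th ps1 ps2 A, sigmaX X A -> P th ps1 A = P th ps2 A)
  (* non-informativeness *)
  (hnoninf : forall A, sigmaR Rp A -> forall th1 th2 ps (h1 h2 : Omega -> R),
      is_cond_prob (sigmaX X) (P th1 ps) A h1 ->
      is_cond_prob (sigmaX X) (P th2 ps) A h2 ->
      {ae P th1 ps, forall w, h1 w = h2 w}) :
  forall (theta : Theta) (psi0 : Psi) (f g : Omega -> R),
    is_RN_deriv (sigmaO X Rp) (P theta psi0) (P theta0 psi0) f ->
    is_RN_deriv (sigmaX X) (P theta psi0) (P theta0 psi0) g ->
    {ae P theta0 psi0, forall w,
        (forall t i, 0 <= t -> Rp t i w = true) -> f w = g w}.
Proof.
move=> theta psi0 f g hf hg.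
have GX := genX_measurable hXm; have GO := genO_measurable hXm hRm.
have mS := sigma_gen_measurable GO (sigmaO_fully_observed hRc).
have Pt_P0 A : sigmaX X A -> P theta0 psi0 A = 0%E -> P theta psi0 A = 0%E.
  move=> hA; have hF : sigmaF X Rp A by apply: sub_sigma_algebra; left.
  exact: (hequiv _ _ _ _ _ hF).1.
pose k := RN_deriv_on GX (P theta psi0) (P theta0 psi0).
have k_ge0 x : 0 <= k x := RN_deriv_on_ge0 GX Pt_P0 x.
have same_cond := hnoninf _ (sigmaR_fully_observed hRc) theta theta0 psi0 _ _
  (is_cond_prob_RN_deriv_on GX (P theta psi0) mS)
  (is_cond_prob_RN_deriv_on GX (P theta0 psi0) mS).
have k_g := RN_deriv_ae_unique GX k_ge0 (is_RN_deriv_on GX Pt_P0) hg.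
have kS_ge0 x : 0 <= (k \_ (fully_observed Rp)) x by rewrite /patch; case: ifP.
have kS_RN := is_RN_deriv_sigmaO_restrict hRc mS (is_RN_deriv_on GX Pt_P0).1
  (RN_deriv_on_setI Pt_P0 same_cond).
have fS_RN := is_RN_deriv_mrestr (sigmaO_fully_observed hRc) mS hf.
have kS_fS := RN_deriv_ae_unique GO kS_ge0 kS_RN fS_RN.
apply: filterS2 k_g kS_fS => w <- + Sw.
by rewrite /patch; have -> : w \in fully_observed Rp by rewrite inE.
Qed.
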